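(* Let $V$, $J$, $\Delta_{\mathbf u,\mathbf v}$, $\phi^+_{\mathbf u}$, $\phi^-_{\mathbf u}$ be as in the context, and say an action $\mathbf u$ is optimal at $\mathbf Q$ if $\mathbf u\in\arg\min_{\mathbf v\in\mathcal U}J(\mathbf Q,\mathbf v)$. Then: (1) Let $\mathbf 0\in\mathcal U$ be the all-zero action and $\mathcal Q_0=\{\mathbf Q\in\mathcal Q: Q_{n,m}\le\phi^+_{\mathbf 0}(\mathbf Q_{-n,-m})\ \forall n\in\mathcal N,\ m\in\mathcal M_n\}$. For every $\mathbf Q\in\mathcal Q_0$, $\Delta_{\mathbf 0,\mathbf v}(\mathbf Q)\le 0$ for all $\mathbf v\in\mathcal U$, so $\mathbf 0$ is optimal at $\mathbf Q$. (2) Let $\mathbf u\in\mathcal U$ with $u_n=m\in\mathcal M_n$ for some $n\in\mathcal N$. Then for every $\mathbf Q\in\mathcal Q$ with $Q_{n,m}\ge\phi^-_{\mathbf u}(\mathbf Q_{-n,-m})$ we have $\Delta_{\mathbf u,\mathbf v}(\mathbf Q)\le0$ for all $\mathbf v\in\mathcal U$, so $\mathbf u$ is optimal at $\mathbf Q$. Moreover, if $u_0=m\in\mathcal M_0$, then $\phi^-_{\mathbf u}(\mathbf Q_{-0,-m})$ is monotonically non-increasing in $Q_{n,m}$ for every $n\in\mathcal N_m$ (all other components held fixed).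
   Context: Model. Let $N\ge 1$, $\mathcal N=\{0,1,\dots,N\}$ (base station $0$ is the macro base station, MBS) and $\mathcal N^+=\{1,\dots,N\}$ (small base stations, SBSs). Let $\mathcal M=\{1,\dots,M\}$ be the set of contents. For each $n\in\mathcal N$ let $\mathcal M_n\subseteq\mathcal M$ be the set of contents cached at BS $n$, with $\mathcal M_0=\mathcal M$; put $\tilde{\mathcal M}_n=\mathcal M_n\cup\{0\}$ and $\mathcal N_m=\{n\in\mathcal N^+: m\in\mathcal M_n\}$. Powers $p(n,m)\ge 0$ are given for $n\in\mathcal N$, $m\in\mathcal M_n$, and $p(n,0)=0$. A weight $w\ge 0$ is fixed. The feasible action space is $\mathcal U=\{\mathbf u=(u_n)_{n\in\mathcal N}: u_n\in\tilde{\mathcal M}_n\ \forall n,\ u_0\sum_{n\in\mathcal N^+}u_n=0\}$. A state is $\mathbf Q=(Q_{n,m})_{n\in\mathcal N,m\in\mathcal M_n}$ with $Q_{n,m}\in\mathcal Q_{n,m}=\{0,1,\dots,N_{n,m}\}$ for given positive integers $N_{n,m}$; $\mathcal Q=\prod_{n\in\mathcal N}\prod_{m\in\mathcal M_n}\mathcal Q_{n,m}$. Arrivals $A_{n,m}$ ($n\in\mathcal N$, $m\in\mathcal M$) are mutually independent nonnegative-integer random variables with fixed distributions, i.i.d. across time slots; $\tilde A_{0,m}=A_{0,m}+\sum_{n\in\mathcal N^+\setminus\mathcal N_m}A_{n,m}$. Given state $\mathbf Q$ and action $\mathbf u$, the next state $\mathbf Q'$ is $Q'_{0,m}=\min\{\mathbf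 1(u_0\neq m)Q_{0,m}+\tilde A_{0,m},N_{0,m}\}$ for $m\in\mathcal M_0$ and $Q'_{n,m}=\min\{\mathbf 1(u_0\neq m\text{ and }u_n\neq m)Q_{n,m}+A_{n,m},N_{n,m}\}$ for $n\in\mathcal N^+$, $m\in\mathcal M_n$; $\mathbb E$ denotes expectation over the arrivals. The per-stage cost is $g(\mathbf Q,\mathbf u)=d(\mathbf Q)+w\,p(\mathbf u)$ with $d(\mathbf Q)=\sum_{n\in\mathcal N}\sum_{m\in\mathcal M_n}Q_{n,m}$ and $p(\mathbf u)=\sum_{n\in\mathcal N}p(n,u_n)$. Value function. Fix a reference state $\mathbf Q^\dagger\in\mathcal Q$. Relative value iteration: $V_0\equiv 0$, $J_{l+1}(\mathbf Q,\mathbf u)=g(\mathbf Q,\mathbf u)+\mathbb E[V_l(\mathbf Q')]$, and $V_{l+1}(\mathbf Q)=\min_{\mathbf u\in\mathcal U}J_{l+1}(\mathbf Q,\mathbf u)-\min_{\mathbf u\in\mathcal U}J_{l+1}(\mathbf Q^\dagger,\mathbf u)$ for $l\ge0$. It is assumed (standing assumption of the paper, guaranteed under its unichain conditions) that $V_l$ converges pointwise to a function $V:\mathcal Q\to\mathbb R$; this $V$ is the value function, which solves the Bellman equation $\theta+V(\mathbf Q)=\min_{\mathbf u\in\mathcal U}\{g(\mathbf Q,\mathbf u)+\mathbb E[V(\mathbf Q')]\}$ for all $\mathbf Q$, and optimal policies choose actions in $\arg\min_{\mathbf u}J(\mathbf Q,\mathbf u)$. Further notation. $J(\mathbf Q,\mathbf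 u)=g(\mathbf Q,\mathbf u)+\mathbb E[V(\mathbf Q')]$ and $\Delta_{\mathbf u,\mathbf v}(\mathbf Q)=J(\mathbf Q,\mathbf u)-J(\mathbf Q,\mathbf v)$. For $(n,m)$ with $m\in\mathcal M_n$, $\mathbf Q_{-n,-m}=(Q_{i,j})_{(i,j)\neq(n,m)}$, and $(Q_{n,m},\mathbf Q_{-n,-m})$ denotes the full state. Define $\Phi_{\mathbf u}(\mathbf Q_{-n,-m})=\{Q_{n,m}\in\mathcal Q_{n,m}: \Delta_{\mathbf u,\mathbf v}(Q_{n,m},\mathbf Q_{-n,-m})\le0\ \forall\mathbf v\in\mathcal U,\ \mathbf v\ne\mathbf u\}$, $\phi^+_{\mathbf u}(\mathbf Q_{-n,-m})=\max\Phi_{\mathbf u}(\mathbf Q_{-n,-m})$ if this set is nonempty and $-\infty$ otherwise, and $\phi^-_{\mathbf u}(\mathbf Q_{-n,-m})=\min\Phi_{\mathbf u}(\mathbf Q_{-n,-m})$ if nonempty and $+\infty$ otherwise. *)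

From HB Require Import structures.
From mathcomp Require Import all_boot all_order all_algebra.
Set Implicit Arguments. Unset Strict Implicit. Unset Printing Implicit Defensive.
Import Order.TTheory GRing.Theory Num.Theory.
Local Open Scope ring_scope.

(* Data of the model.
   - base stations : 'I_(nBS).+1  (ord0 = MBS, the others = SBSs), nBS = N
   - contents      : 'I_nC        (content index i stands for content i+1), nC = M
   - actions u_n   : option 'I_nC (None = "0" = idle, Some m = serve content m)
   - cache n       : the set M_n
   - cap n m       : N_{n,m}
   - pow n m       : p(n,m)   (p(n,0) = 0 is built in, see [cost])
   - weight        : w
   - parr n m k    : P(A_{n,m} = k), the pmf of the arrival A_{n,m}
   - Qref          : the reference state Q^dagger *)
Record model (R : realFieldType) := Model {
  nBS : nat;
  nC : nat;
  cache : 'I_nBS.+1 -> {set 'I_nC};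
  cap : 'I_nBS.+1 -> 'I_nC -> nat;
  pow : 'I_nBS.+1 -> 'I_nC -> R;
  weight : R;
  parr : 'I_nBS.+1 -> 'I_nC -> nat -> R;
  Qref : {ffun 'I_nBS.+1 * 'I_nC -> nat}
}.

Arguments nBS {R} m.
Arguments nC {R} m.
Arguments cache {R} m _.
Arguments cap {R} m _ _.
Arguments pow {R} m _ _.
Arguments weight {R} m.
Arguments parr {R} m _ _ _.
Arguments Qref {R} m.

Section Model.
Variables (R : realFieldType) (S : model R).

Local Notation BS := ('I_(nBS S).+1).
Local Notation CT := ('I_(nC S)).

(* States: Q_{n,m}; coordinates with m \notin M_n are fixed to 0 (they are
   not part of the state in the paper). *)
Definition state := {ffun BS * CT -> nat}.
Definition action := {ffun BS -> option CT}.

Definition valid (Q : state) : bool :=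
  [forall p : BS * CT,
     if p.2 \in cache S p.1 then (Q p <= cap S p.1 p.2)%N else Q p == 0%N].

Definition feasible (u : action) : bool :=
  [forall n : BS, if u n is Some m then m \in cache S n else true] &&
  ((u ord0 == None) || [forall n : BS, (n != ord0) ==> (u n == None)]).

Definition act0 : action := [ffun => None].

Definition dcost (Q : state) : R :=
  \sum_(p : BS * CT | p.2 \in cache S p.1) (Q p)%:R.
Definition pcost (u : action) : R :=
  \sum_(n : BS) (if u n is Some m then pow S n m else 0).
Definition cost (Q : state) (u : action) : R := dcost Q + weight S * pcost u.

(* The next state only depends on the
   arrivals through min(A_{n,m}, K) where K = max N_{n,m}; we therefore
   compute the expectation exactly via the law of the truncated arrivals
   min(A_{n,m}, K), whose pmf is [qtr]. *)
Definition Kmax : nat := \max_(p : BS * CT) cap S p.1 p.2.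
Definition arr := {ffun BS * CT -> 'I_Kmax.+1}.

Definition qtr (n : BS) (m : CT) (k : 'I_Kmax.+1) : R :=
  if (k < Kmax)%N then parr S n m k
  else 1 - \sum_(j < Kmax) parr S n m j.

Definition Atil0 (a : arr) (m : CT) : nat :=
  (a (ord0, m) + \sum_(n : BS | (n != ord0) && (m \notin cache S n)) a (n, m))%N.

Definition next (Q : state) (u : action) (a : arr) : state :=
  [ffun p : BS * CT =>
     if p.1 == ord0 then
       minn ((if u ord0 != Some p.2 then Q p else 0) + Atil0 a p.2)%N (cap S p.1 p.2)
     else if p.2 \in cache S p.1 then
       minn ((if (u ord0 != Some p.2) && (u p.1 != Some p.2) then Q p else 0)
             + a p)%N (cap S p.1 p.2)
     else 0%N].

Definition Expect (f : arr -> R) : R :=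
  \sum_(a : arr) (\prod_(p : BS * CT) qtr p.1 p.2 (a p)) * f a.

Definition Jfun (V : state -> R) (Q : state) (u : action) : R :=
  cost Q u + Expect (fun a => V (next Q u a)).

(* min over u \in \mathcal U (act0 is always feasible) *)
Definition minU (F : action -> R) : R :=
  \big[Order.min/F act0]_(u | feasible u) F u.

Fixpoint RVI (l : nat) : state -> R :=
  match l with
  | 0 => fun _ => 0
  | l'.+1 => fun Q => minU (Jfun (RVI l') Q) - minU (Jfun (RVI l') (Qref S))
  end.

Definition RVI_converges (V : state -> R) : Prop :=
  forall Q, valid Q -> forall eps : R, 0 < eps ->
    exists L, forall l, (L <= l)%N -> `|RVI l Q - V Q| < eps.

Definition Delta (V : state -> R) (Q : state) (u v : action) : R :=
  Jfun V Q u - Jfun V Q v.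

Definition optimal (V : state -> R) (Q : state) (u : action) : Prop :=
  feasible u /\ forall v, feasible v -> Jfun V Q u <= Jfun V Q v.

Definition setQ (Q : state) (n : BS) (m : CT) (k : nat) : state :=
  [ffun p => if p == (n, m) then k else Q p].

(* Phi_u(Q_{-n,-m}) (depends on Q only through Q_{-n,-m}) *)
Definition PhiSet (V : state -> R) (u : action) (n : BS) (m : CT) (Q : state)
  : seq nat :=
  [seq k <- iota 0 (cap S n m).+1 |
     [forall v : action, (feasible v && (v != u)) ==>
                         (Delta V (setQ Q n m k) u v <= 0)]].

(* phi^+ : None stands for -infinity *)
Definition phi_plus V u n m Q : option nat :=
  if PhiSet V u n m Q is [::] then None
  else Some (\max_(k <- PhiSet V u n m Q) k)%N.

(* phi^- : None stands for +infinity *)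
Definition phi_minus V u n m Q : option nat :=
  if PhiSet V u n m Q is [::] then None
  else Some (\big[minn/cap S n m]_(k <- PhiSet V u n m Q) k)%N.

Definition wf_model : Prop :=
  (0 < nBS S)%N /\
  cache S ord0 = setT /\
  (forall n m, m \in cache S n -> (0 < cap S n m)%N) /\
  (forall n m, m \in cache S n -> 0 <= pow S n m) /\
  0 <= weight S /\
  (forall n m k, 0 <= parr S n m k) /\
  (forall n m (eps : R), 0 < eps -> exists K0, forall K1, (K0 <= K1)%N ->
      `|1 - \sum_(k < K1) parr S n m k| < eps) /\
  valid (Qref S).

End Model.

Definition le_phi_plus (x : nat) (o : option nat) : Prop :=
  if o is Some b then (x <= b)%N else False.
Definition ge_phi_minus (x : nat) (o : option nat) : Prop :=
  if o is Some b then (b <= x)%N else False.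
Definition le_inf (o1 o2 : option nat) : Prop :=
  match o1, o2 with
  | _, None => True
  | None, Some _ => False
  | Some a, Some b => (a <= b)%N
  end.

From Pilot Require Import Defs.
From HB Require Import structures.
From mathcomp Require Import all_boot all_order all_algebra.
From mathcomp Require Import zify lra.
Import Order.TTheory GRing.Theory Num.Theory.
Local Open Scope ring_scope.

(* The relative value iterates V_l are nondecreasing in the state (induction on
   l, since d, the transition and the expectation are), hence so is their limit
   V.  If an action u serves queue (n, m), i.e. u_0 = m or u_n = m, the next
   state under u does not depend on Q_{n,m}, so Q_{n,m} enters J(Q, u) only
   through the linear cost d(Q), while it enters J(Q, v) through d(Q) and the
   monotone V.  Hence Delta_{u,v} is nonincreasing in Q_{n,m}: optimality of u
   at a threshold in Phi_u propagates upwards, which gives (2) and the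
   monotonicity of phi^-, and optimality of 0 propagates downwards from phi^+
   along the queue served by any competing v, which gives (1). *)

Lemma big_sel_mem (T : eqType) (op : T -> T -> T) (idx : T) (s : seq T) :
  (forall x y, op x y \in [:: x; y]) -> {in s, forall x, op x idx = x} ->
  s != [::] -> \big[op/idx]_(x <- s) x \in s.
Proof.
move=> opsel; elim: s => // x [|y t] IH xidx _.
  by rewrite big_cons big_nil xidx ?mem_head.
rewrite big_cons.
have /predU1P[->|/predU1P[->|//]] := opsel x (\big[op/idx]_(k <- y :: t) k).
  exact: mem_head.
by rewrite in_cons IH ?orbT // => z zt; apply: xidx; rewrite in_cons zt orbT.
Qed.

Lemma bigmaxn_mem (s : seq nat) : s != [::] -> (\max_(k <- s) k \in s)%N.
Proof.
apply: big_sel_mem => [x y|x _]; last exact: maxn0.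
by rewrite /maxn; case: ifP; rewrite !inE eqxx ?orbT.
Qed.

Lemma bigminn_mem (c : nat) (s : seq nat) : all (leq^~ c) s -> s != [::] ->
  (\big[minn/c]_(k <- s) k \in s)%N.
Proof.
move/allP=> s_le; apply: big_sel_mem => [x y|x /s_le/minn_idPl //].
by rewrite /minn; case: ifP; rewrite !inE eqxx ?orbT.
Qed.

Lemma bigminn_le_mem (c : nat) (s : seq nat) x :
  x \in s -> (\big[minn/c]_(k <- s) k <= x)%N.
Proof. by move=> xs; exact: (@ge_bigmin_seq _ nat nat s c x xpredT id xs isT). Qed.

Lemma le_lim (R : realFieldType) (f g : nat -> R) (a b : R) :
  (forall l, f l <= g l) ->
  (forall eps, 0 < eps -> exists L, forall l, (L <= l)%N -> `|f l - a| < eps) ->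
  (forall eps, 0 < eps -> exists L, forall l, (L <= l)%N -> `|g l - b| < eps) ->
  a <= b.
Proof.
move=> fg fa gb; rewrite leNgt; apply/negP => ba.
have eps_gt0 : 0 < (a - b) / 2 by rewrite divr_gt0 // subr_gt0.
have [L1 HL1] := fa _ eps_gt0; have [L2 HL2] := gb _ eps_gt0.
have := HL1 (maxn L1 L2) (leq_maxl _ _); have := HL2 (maxn L1 L2) (leq_maxr _ _).
have := fg (maxn L1 L2); set x := f _; set y := g _ => xy yb xa.
have := ler_norm (y - b); have := ler_norm (a - x); rewrite distrC.
by clear -xy yb xa ba; lra.
Qed.

Section HetNet.
Context {R : realFieldType} {S : model R}.
Hypothesis HS : wf_model S.

Local Notation BS := ('I_(nBS S).+1).
Local Notation CT := ('I_(nC S)).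
Local Notation next := (@Defs.next R S).

(* [qtr] puts the tail mass 1 - sum_{j < Kmax} P(A = j) on Kmax; it is
   nonnegative because the partial sums of the pmf converge to 1. *)
Lemma qtr_ge0 (n : BS) (m : CT) k : 0 <= qtr n m k.
Proof.
have [_ [_ [_ [_ [_ [parr_ge0 [parr_sum1 _]]]]]]] := HS.
rewrite /qtr; case: ifP => _; first exact: parr_ge0.
rewrite subr_ge0 leNgt; apply/negP => gt1.
set s0 := \sum_(j < Kmax S) parr S n m j in gt1.
have [K0 HK] : exists K0, forall K1, (K0 <= K1)%N ->
    `|1 - \sum_(k < K1) parr S n m k| < s0 - 1.
  by apply: parr_sum1; rewrite subr_gt0.
set K1 := maxn K0 (Kmax S).
have s0_le : s0 <= \sum_(k < K1) parr S n m k.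
  rewrite /s0 -!(big_mkord xpredT (parr S n m)).
  rewrite [leRHS](big_cat_nat _ (n := Kmax S)) ?leq_maxr //= lerDl.
  by apply: sumr_ge0 => i _; exact: parr_ge0.
have := HK K1 (leq_maxl _ _); have := ler_norm (\sum_(k < K1) parr S n m k - 1).
by rewrite distrC; clear -s0_le gt1; lra.
Qed.

Lemma le_dcost (x y : state S) : (forall p, x p <= y p)%N -> dcost x <= dcost y.
Proof. by move=> xy; apply: ler_sum => p _; rewrite ler_nat. Qed.

Lemma le_next (x y : state S) u a : (forall p, x p <= y p)%N ->
  forall p, (next x u a p <= next y u a p)%N.
Proof. by move=> xy p; rewrite !ffunE; have := xy p; do ! case: ifP => _; lia. Qed.

Lemma le_Expect (f g : arr S -> R) : (forall a, f a <= g a) -> Expect f <= Expect g.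
Proof.
move=> fg; apply: ler_sum => a _; apply: ler_wpM2l; last exact: fg.
by apply: prodr_ge0 => p _; exact: qtr_ge0.
Qed.

Lemma le_minU (F G : action S -> R) : (forall u, F u <= G u) -> minU F <= minU G.
Proof.
move=> FG; apply: (big_ind2 (fun x y => x <= y)) => //.
by move=> *; apply: le_min2.
Qed.

Lemma le_RVI l (x y : state S) : (forall p, x p <= y p)%N -> RVI l x <= RVI l y.
Proof.
elim: l x y => [|l IH] x y xy //=.
rewrite lerD2r; apply: le_minU => u; rewrite /Jfun /cost.
rewrite lerD ?lerD2r ?le_dcost //.
by apply: le_Expect => a; apply: IH; exact: le_next.
Qed.

Lemma next_valid (Q : state S) u a : valid (next Q u a).
Proof.
have [_ [cache0 _]] := HS.
apply/forallP => -[i j] /=; rewrite !ffunE /=.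
case: (eqVneq i ord0) => [->|_]; first by rewrite cache0 in_setT geq_minr.
by case: (j \in cache S i); rewrite ?geq_minr.
Qed.

Lemma setQ_id (Q : state S) n m : setQ Q n m (Q (n, m)) = Q.
Proof. by apply/ffunP => p; rewrite ffunE; case: eqP => [->|]. Qed.

Lemma setQC (Q : state S) n m n' m' a b : (n, m) != (n', m') ->
  setQ (setQ Q n m a) n' m' b = setQ (setQ Q n' m' b) n m a.
Proof.
move=> ne; apply/ffunP => p; rewrite !ffunE.
case: (eqVneq p (n', m')) => [->|//]; by rewrite eq_sym (negbTE ne).
Qed.

Lemma le_setQ (Q : state S) n m k1 k2 : (k1 <= k2)%N ->
  forall p, (setQ Q n m k1 p <= setQ Q n m k2 p)%N.
Proof. by move=> k12 p; rewrite !ffunE; case: ifP. Qed.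

Definition serves (u : action S) (n : BS) (m : CT) : Prop :=
  u ord0 = Some m \/ u n = Some m.

Lemma next_setQ_served (Q : state S) u n m k a : serves u n m ->
  next (setQ Q n m k) u a = next (setQ Q n m 0) u a.
Proof.
move=> su; apply/ffunP => -[i j]; rewrite !ffunE /=.
case: (eqVneq (i, j) (n, m)) => [[-> ->]|//]; rewrite ?eqxx.
case: ifP => [/eqP n0|_]; last by case: su => ->; rewrite eqxx ?andbF.
have -> : u ord0 = Some m by case: su => //; rewrite n0.
by rewrite eqxx.
Qed.

Lemma feasible_act0 : feasible (act0 S).
Proof. by apply/andP; split; [apply/forallP => n|]; rewrite ffunE. Qed.

Lemma exists_served (v : action S) : feasible v -> v != act0 S ->
  exists n m, m \in cache S n /\ v n = Some m.
Proof.
case/andP => /forallP vcache _ /eqP v_ne0.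
have [n vn|v0] := pickP (fun n => v n != None); last first.
  by case: v_ne0; apply/ffunP => n; rewrite ffunE; have := v0 n; case: (v n).
case E: (v n) vn => [m|//] _; exists n, m; split=> //.
by have := vcache n; rewrite E.
Qed.

Section ValueFunction.
Context {V : state S -> R}.
Hypothesis HV : RVI_converges V.

Lemma le_V (x y : state S) : valid x -> valid y ->
  (forall p, x p <= y p)%N -> V x <= V y.
Proof.
move=> vx vy xy.
apply: (@le_lim _ (fun l => RVI l x) (fun l => RVI l y)); last exact: HV.
- by move=> l; apply: le_RVI.
- exact: HV.
Qed.

Lemma Delta_setQ_antitone {Q : state S} {u} v {n m k1 k2} : serves u n m ->
  (k1 <= k2)%N -> Delta V (setQ Q n m k2) u v <= Delta V (setQ Q n m k1) u v.
Proof.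
move=> su k12.
have EVu k : Expect (fun a => V (next (setQ Q n m k) u a)) =
             Expect (fun a => V (next (setQ Q n m 0) u a)).
  by apply: eq_bigr => a _; rewrite next_setQ_served.
have EVv : Expect (fun a => V (next (setQ Q n m k1) v a)) <=
           Expect (fun a => V (next (setQ Q n m k2) v a)).
  apply: le_Expect => a; apply: le_V; try exact: next_valid.
  exact/le_next/le_setQ.
rewrite /Delta /Jfun /cost !EVu; lra.
Qed.

Lemma mem_PhiSet u n m Q k : k \in PhiSet V u n m Q <->
  (k <= cap S n m)%N /\ forall v, feasible v -> Delta V (setQ Q n m k) u v <= 0.
Proof.
rewrite mem_filter mem_iota add0n ltnS leq0n andbC /=; split.
  case/andP=> -> /forallP Phi; split=> // v fv.
  have [->|ne] := eqVneq v u; first by rewrite /Delta subrr.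
  by have /implyP := Phi v; apply; rewrite fv ne.
case=> -> Phi; apply/forallP => v; apply/implyP => /andP [fv _]; exact: Phi.
Qed.

Lemma PhiSet_le_cap u n m Q : all (leq^~ (cap S n m)) (PhiSet V u n m Q).
Proof. by apply/allP => k /mem_PhiSet[]. Qed.

Lemma phi_plus_witness u n m Q x : le_phi_plus x (phi_plus V u n m Q) ->
  exists2 b, b \in PhiSet V u n m Q & (x <= b)%N.
Proof.
rewrite /phi_plus; case E: (PhiSet V u n m Q) => [//|k s] /= le_x.
by exists (\max_(j <- k :: s) j)%N => //; apply: bigmaxn_mem.
Qed.

Lemma phi_minus_witness u n m Q x : ge_phi_minus x (phi_minus V u n m Q) ->
  exists2 b, b \in PhiSet V u n m Q & (b <= x)%N.
Proof.
rewrite /phi_minus; case E: (PhiSet V u n m Q) => [//|k s] /= le_x.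
exists (\big[minn/cap S n m]_(j <- k :: s) j)%N => //.
by rewrite -E bigminn_mem ?PhiSet_le_cap ?E.
Qed.

Lemma le_inf_phi_minus u n m Q1 Q2 :
  {subset PhiSet V u n m Q1 <= PhiSet V u n m Q2} ->
  le_inf (phi_minus V u n m Q2) (phi_minus V u n m Q1).
Proof.
move=> sub12; rewrite /phi_minus.
case E1: (PhiSet V u n m Q1) => [|k s]; first by case: (PhiSet V u n m Q2).
have b_in : (\big[minn/cap S n m]_(j <- k :: s) j \in PhiSet V u n m Q2)%N.
  by apply: sub12; rewrite -E1 bigminn_mem ?PhiSet_le_cap ?E1.
case E2: (PhiSet V u n m Q2) b_in => [//|k2 s2] b_in.
exact: bigminn_le_mem.
Qed.

Lemma Delta_le0_above {u n m Q k} : serves u n m ->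
  k \in PhiSet V u n m Q -> (k <= Q (n, m))%N ->
  forall v, feasible v -> Delta V Q u v <= 0.
Proof.
move=> su /mem_PhiSet[_ Phi] kQ v fv.
have := Delta_setQ_antitone (Q := Q) v su kQ; rewrite setQ_id => le_Delta.
exact: le_trans le_Delta (Phi v fv).
Qed.

Lemma Delta_act0_le0_below {v : action S} {n m Q k} : feasible v -> v n = Some m ->
  k \in PhiSet V (act0 S) n m Q -> (Q (n, m) <= k)%N ->
  Delta V Q (act0 S) v <= 0.
Proof.
move=> fv vn /mem_PhiSet[_ Phi] Qk.
have := Delta_setQ_antitone (Q := Q) (act0 S) (or_intror vn) Qk; rewrite setQ_id.
by have := Phi v fv; rewrite /Delta; lra.
Qed.

Lemma PhiSet_setQ_subset {u n m n' k1 k2 Q} : serves u n' m -> (n', m) != (n, m) ->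
  (k1 <= k2)%N ->
  {subset PhiSet V u n m (setQ Q n' m k1) <= PhiSet V u n m (setQ Q n' m k2)}.
Proof.
move=> su ne k12 k /mem_PhiSet[k_le Phi]; apply/mem_PhiSet; split=> // v fv.
rewrite setQC // in Phi; rewrite setQC //.
exact: le_trans (Delta_setQ_antitone v su k12) (Phi v fv).
Qed.

Lemma optimal_of_Delta_le0 {Q u} : feasible u ->
  (forall v, feasible v -> Delta V Q u v <= 0) -> optimal V Q u.
Proof. by move=> fu Delta_le0; split=> // v fv; rewrite -subr_le0 Delta_le0. Qed.

End ValueFunction.

End HetNet.

Theorem theorem1 (R : realFieldType) (S : model R) (HS : wf_model S)
  (V : state S -> R) (HV : RVI_converges V) :
  (* (1) *)
  (forall Q : state S, valid Q ->
     (forall n m, m \in cache S n ->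
        le_phi_plus (Q (n, m)) (phi_plus V (act0 S) n m Q)) ->
     (forall v, feasible v -> Delta V Q (act0 S) v <= 0) /\ optimal V Q (act0 S))
  /\
  (* (2), first claim *)
  (forall (u : action S) n m, feasible u -> u n = Some m ->
     forall Q : state S, valid Q ->
       ge_phi_minus (Q (n, m)) (phi_minus V u n m Q) ->
       (forall v, feasible v -> Delta V Q u v <= 0) /\ optimal V Q u)
  /\
  (* (2), monotonicity of phi^-_u(Q_{-0,-m}) in Q_{n',m}, n' \in N_m *)
  (forall (u : action S) m, feasible u -> u ord0 = Some m ->
     forall Q : state S, valid Q ->
     forall n', n' != ord0 -> m \in cache S n' ->
     forall k1 k2, (k1 <= k2 <= cap S n' m)%N ->
       le_inf (phi_minus V u ord0 m (setQ Q n' m k2))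
              (phi_minus V u ord0 m (setQ Q n' m k1))).
Proof.
split; [|split].
- move=> Q _ below_phi.
  suff Delta_le0 : forall v, feasible v -> Delta V Q (act0 S) v <= 0.
    by split=> //; exact: optimal_of_Delta_le0 feasible_act0 Delta_le0.
  move=> v fv; have [->|v_ne0] := eqVneq v (act0 S); first by rewrite /Delta subrr.
  have [n [m [m_in vn]]] := exists_served v fv v_ne0.
  have /phi_plus_witness[b Phib Qb] := below_phi n m m_in.
  exact: (Delta_act0_le0_below HS HV fv vn Phib Qb).
- move=> u n m fu un Q _ /phi_minus_witness[b Phib bQ].
  have Delta_le0 := Delta_le0_above HS HV (or_intror un) Phib bQ.
  by split=> //; exact: optimal_of_Delta_le0 fu Delta_le0.
- move=> u m _ u0 Q _ n' n'_ne0 _ k1 k2 /andP[k12 _].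
  have ne : (n', m) != (ord0, m) by apply/eqP => -[/eqP]; rewrite (negbTE n'_ne0).
  exact: le_inf_phi_minus (PhiSet_setQ_subset HS HV (or_introl u0) ne k12).
Qed.
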